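(* Let $S\subseteq\mathbb{R}^2$ be the set of all pairs $(c_3,c_4)$ such that there is a sequence of tournaments $(T_n)$ with $|T_n|\to\infty$ for which $c_3=\lim_n\mathbf{pr}(C_3,T_n)$ and $c_4=\lim_n\mathbf{pr}(C_4,T_n)$ (both limits existing). Then $S$ is simply connected.
   Context: For tournaments $T,H$, $\mathbf{pr}(H,T)$ denotes the probability that a uniformly random set of $|H|$ vertices of $T$ spans a subtournament isomorphic to $H$. $C_3$ is the cyclically oriented triangle and $C_4$ is the $4$-vertex tournament (unique up to isomorphism) containing a directed Hamiltonian $4$-cycle. *)

From HB Require Import structures.
From mathcomp Require Import all_boot all_order all_algebra.
From mathcomp Require Import all_classical all_reals all_analysis.
Set Implicit Arguments. Unset Strict Implicit. Unset Printing Implicit Defensive.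
Import Order.TTheory GRing.Theory Num.Theory.
Import numFieldNormedType.Exports.
Local Open Scope classical_set_scope.
Local Open Scope ring_scope.

Definition is_tournament (n : nat) (T : rel 'I_n) : Prop :=
  (forall x, ~~ T x x) /\
  (forall x y, x != y -> (T x y || T y x) && ~~ (T x y && T y x)).

Definition spans_copy (k n : nat) (H : rel 'I_k) (T : rel 'I_n)
    (A : {set 'I_n}) : Prop :=
  exists f : 'I_k -> 'I_n,
    [/\ injective f, f @: setT = A & forall i j, H i j = T (f i) (f j)].

Definition pr (R : realType) (k n : nat) (H : rel 'I_k) (T : rel 'I_n) : R :=
  (#|[set A : {set 'I_n} | (#|A| == k) && `[< spans_copy H T A >]]%SET|%:R)
    / ('C(n, k))%:R.

Definition C3 : rel 'I_3 := fun i j => (j == (i.+1 %% 3)%N :> nat).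

(* C4: the 4-vertex tournament with Hamiltonian cycle 0->1->2->3->0 and
   diagonals 0 -> 2, 1 -> 3. *)
Definition C4 : rel 'I_4 := fun i j =>
  (j == (i.+1 %% 4)%N :> nat) || ((i < 2)%N && (j == (i + 2)%N :> nat)).

Definition limit_set (R : realType) : set (R * R) :=
  [set c | exists (N : nat -> nat) (T : forall m, rel 'I_(N m)),
     [/\ (forall m, is_tournament (T m)),
         (forall B : nat, exists M : nat, forall m, (M <= m)%N -> (B <= N m)%N),
         (fun m => pr R C3 (T m)) @ \oo --> c.1 &
         (fun m => pr R C4 (T m)) @ \oo --> c.2]].

Definition unit_I (R : realType) : set R := `[0, 1]%classic.
Arguments unit_I R : clear implicits.

Definition path_in (R : realType) (S : set (R * R)) (g : R -> R * R) : Prop :=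
  {within unit_I R, continuous g} /\ (forall t, unit_I R t -> S (g t)).

Definition simply_connected (R : realType) (S : set (R * R)) : Prop :=
  [/\ S !=set0,
      (forall x y, S x -> S y ->
         exists g, [/\ path_in S g, g 0 = x & g 1 = y]) &
      (forall g, path_in S g -> g 0 = g 1 ->
         exists Hm : R * R -> R * R,
           [/\ {within unit_I R `*` unit_I R, continuous Hm},
               (forall p, (unit_I R `*` unit_I R) p -> S (Hm p)),
               (forall t, unit_I R t -> Hm (t, 0) = g t),
               (forall t, unit_I R t -> Hm (t, 1) = g 0) &
               (forall s, unit_I R s -> Hm (0, s) = g 0 /\ Hm (1, s) = g 0)])].
Arguments limit_set R : clear implicits.

From HB Require Import structures.
From mathcomp Require Import all_boot all_order all_algebra.
From mathcomp Require Import all_classical all_reals all_analysis.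
From mathcomp Require Import ring lra.
Set Implicit Arguments. Unset Strict Implicit. Unset Printing Implicit Defensive.
Import Order.TTheory GRing.Theory Num.Theory.
Import numFieldNormedType.Exports.
Local Open Scope classical_set_scope.
Local Open Scope ring_scope.

(* Let T have N vertices and add L new vertices forming a transitive tournament,
   every old vertex beating every new one.  C3 and C4 have no sink, while the
   largest new vertex of any vertex set is a sink of the subtournament it spans,
   so every copy of C3 or C4 lies among the old vertices and pr(H, .) gets
   multiplied by C(N, k) / C(N + L, k), which tends to a^k when N / (N + L)
   tends to a.  Hence S contains the origin and is closed under the weighted
   dilations (c3, c4) |-> (a^3 c3, a^4 c4), 0 <= a <= 1.  Any such set is
   simply connected: two points are joined through the origin along their
   dilation curves, and a loop is contracted by dilating it towards the origin
   while its base point travels along its own dilation curve. *)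

Definition wdilate (R : realType) (m n : nat) (a : R) (p : R * R) : R * R :=
  (a ^+ m * p.1, a ^+ n * p.2).

Section Clamp.
Variable R : realType.

Definition clamp01 (x : R) : R := Num.max 0 (Num.min x 1).

Lemma unit_IP (t : R) : unit_I R t <-> 0 <= t <= 1.
Proof. by rewrite /unit_I /= in_itv. Qed.

Lemma clamp01_in x : unit_I R (clamp01 x).
Proof. by apply/unit_IP; rewrite le_max lexx ge_max ler01 ge_min lexx orbT. Qed.

Lemma clamp01_id x : unit_I R x -> clamp01 x = x.
Proof. by move=> /unit_IP/andP[x0 x1]; rewrite /clamp01 min_l // max_r. Qed.

Lemma clamp01_le0 x : x <= 0 -> clamp01 x = 0.
Proof. by move=> x0; rewrite /clamp01 max_l // ge_min x0. Qed.

Lemma clamp01_ge1 x : 1 <= x -> clamp01 x = 1.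
Proof. by move=> x1; rewrite /clamp01 min_r // max_r. Qed.

Section MaxMin.
Variables (T : Type) (F : set_system T) (FF : Filter F) (f g : T -> R) (a b : R).
Hypotheses (fa : f @ F --> a) (gb : g @ F --> b).

Lemma cvg_max : Num.max (f y) (g y) @[y --> F] --> Num.max a b.
Proof. exact: (continuous_cvg _ (@max_continuous _ R (a, b)) (cvg_pair fa gb)). Qed.

Lemma cvg_min : Num.min (f y) (g y) @[y --> F] --> Num.min a b.
Proof. exact: (continuous_cvg _ (@min_continuous _ R (a, b)) (cvg_pair fa gb)). Qed.

End MaxMin.

Lemma clamp01_continuous : continuous clamp01.
Proof.
apply: max_fun_continuous; first exact: cst_continuous.
by apply: min_fun_continuous; [move=> ?; exact: cvg_id | exact: cst_continuous].
Qed.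

Lemma continuous_comp_clamp01 (T : topologicalType) (g : R -> T) :
  {within unit_I R, continuous g} -> continuous (g \o clamp01).
Proof.
move=> gc x W Wg.
have : within (unit_I R) (nbhs (clamp01 x)) (g @^-1` W).
  by rewrite (nbhs_subspace_in (clamp01_in x)) in gc *; exact: gc.
move=> /clamp01_continuous.
exact: filterS (fun y (gy : unit_I R (clamp01 y) -> W (g (clamp01 y))) => gy (clamp01_in y)).
Qed.

End Clamp.

(* Limits of real expressions built from + - * max min and norm; [fun y => c * y]
   reaches the goal eta-contracted, hence the [*%R _] case. *)
Ltac cvg_expr := repeat match goal with
  | |- cvg_to (nbhs (fmap (fun _ => ?c) _)) _ => exact: cvg_cst
  | |- cvg_to (nbhs (fmap (fun y => y) _)) _ => exact: cvg_id
  | |- cvg_to (nbhs (fmap (fun _ => _ + _) _)) _ => apply: cvgD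
  | |- cvg_to (nbhs (fmap (fun _ => - _) _)) _ => apply: cvgN
  | |- cvg_to (nbhs (fmap (fun _ => _ * _) _)) _ => apply: cvgM
  | |- cvg_to (nbhs (fmap ( *%R _) _)) _ => apply: cvgM
  | |- cvg_to (nbhs (fmap (fun _ => Num.max _ _) _)) _ => apply: cvg_max
  | |- cvg_to (nbhs (fmap (fun _ => Num.min _ _) _)) _ => apply: cvg_min
  | |- cvg_to (nbhs (fmap (fun _ => `|_|) _)) _ => apply: cvg_norm
  | |- _ => first [exact: cvg_fst | exact: cvg_snd]
  end.

Section WeightedStarShaped.
Variables (R : realType) (m n : nat).
Hypotheses (m_gt0 : (0 < m)%N) (n_gt0 : (0 < n)%N).

Local Notation dil := (@wdilate R m n).

Lemma wdilate0 p : dil 0 p = 0.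
Proof. by rewrite /wdilate !expr0n (gtn_eqF m_gt0) (gtn_eqF n_gt0) !mul0r. Qed.

Lemma wdilate1 p : dil 1 p = p.
Proof. by rewrite /wdilate !expr1n !mul1r; case: p. Qed.

Lemma wdilateD a p q : dil a (p + q) = dil a p + dil a q.
Proof. by rewrite /wdilate /= !mulrDr. Qed.

Lemma cvg_wdilate (T : Type) (F : set_system T) (FF : Filter F)
    (f : T -> R) (g : T -> R * R) a p :
  f @ F --> a -> g @ F --> p -> (fun y => dil (f y) (g y)) @ F --> dil a p.
Proof.
move=> fa gp.
have cX k : (f y ^+ k) @[y --> F] --> a ^+ k.
  exact: continuous_cvg (@exprn_continuous R k _) fa.
have c1 : (g y).1 @[y --> F] --> p.1 by apply: continuous_cvg gp; exact: cvg_fst.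
have c2 : (g y).2 @[y --> F] --> p.2 by apply: continuous_cvg gp; exact: cvg_snd.
exact: cvg_pair (cvgM (cX m) c1) (cvgM (cX n) c2).
Qed.

Variable S : set (R * R).
Hypothesis S0 : S 0.
Hypothesis S_wdilate : forall a p, 0 <= a <= 1 -> S p -> S (dil a p).

Definition star_path (x y : R * R) (t : R) : R * R :=
  dil (Num.max (1 - 2 * t) 0) x + dil (Num.max (2 * t - 1) 0) y.

Lemma star_path_continuous x y : continuous (star_path x y).
Proof.
by move=> t; rewrite /star_path; apply: cvgD; apply: cvg_wdilate; cvg_expr.
Qed.

Lemma star_path_in x y t : S x -> S y -> unit_I R t -> S (star_path x y t).
Proof.
move=> Sx Sy /unit_IP/andP[t0 t1]; rewrite /star_path.
have [t_le|t_gt] := leP t (1/2).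
- rewrite (@max_r _ _ (2 * t - 1)); last lra.
  by rewrite wdilate0 addr0 max_l; [apply: S_wdilate => //; lra | lra].
- rewrite (@max_r _ _ (1 - 2 * t)); last lra.
  by rewrite wdilate0 add0r max_l; [apply: S_wdilate => //; lra | lra].
Qed.

Lemma star_path0 x y : star_path x y 0 = x.
Proof.
rewrite /star_path mulr0 subr0 sub0r (@max_l _ _ 1 0) ?ler01 //.
by rewrite (@max_r _ _ (-1) 0) ?lerN10 // wdilate1 wdilate0 addr0.
Qed.

Lemma star_path1 x y : star_path x y 1 = y.
Proof.
rewrite /star_path (_ : 1 - 2 * 1 = -1); last lra.
rewrite (_ : 2 * 1 - 1 = 1); last lra.
rewrite (@max_l _ _ 1 0) ?ler01 //.
by rewrite (@max_r _ _ (-1) 0) ?lerN10 // wdilate1 wdilate0 add0r.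
Qed.

Definition edge_dist (p : R * R) : R := Num.min p.1 (1 - p.1).
Definition stretch (p : R * R) : R :=
  1/2 + (p.1 - 1/2) * (1 + 4 * Num.min p.2 (1/2)).
Definition ray_level (p : R * R) : R := Num.max (1 - 3 * edge_dist p) `|1 - 2 * p.2|.
Definition loop_level (p : R * R) : R :=
  Num.max (Num.max (1 - 3 * edge_dist p) (1 - 2 * p.2)) 0.

Lemma edge_distP t s : 0 <= t <= 1 ->
  [/\ 0 <= edge_dist (t, s), edge_dist (t, s) <= t, edge_dist (t, s) <= 1 - t
    & edge_dist (t, s) = t \/ edge_dist (t, s) = 1 - t].
Proof.
move=> /andP[t0 t1]; rewrite /edge_dist /=.
case: (leP t (1 - t)) => tt; first by split; [lra|lra|lra|left].
by split; [lra|lra|lra|right].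
Qed.

Lemma ray_level_unit t s : 0 <= t <= 1 -> 0 <= s <= 1 -> 0 <= ray_level (t, s) <= 1.
Proof.
move=> t01 /andP[s0 s1]; have [d0 _ _ _] := edge_distP s t01.
rewrite /ray_level le_max normr_ge0 orbT ge_max ler_norml /=.
apply/and3P; split; lra.
Qed.

Lemma ray_level_boundary t s : 0 <= t <= 1 -> 0 <= s <= 1 ->
  [\/ s = 0, s = 1, t = 0 | t = 1] -> ray_level (t, s) = 1.
Proof.
move=> t01 /andP[s0 s1] ts; have [d0 dt d1t _] := edge_distP s t01.
rewrite /ray_level /=; case: ts => e; subst.
- by rewrite mulr0 subr0 normr1 max_r //; lra.
- by rewrite mulr1 (_ : 1 - 2 = -1) ?normrN ?normr1 ?max_r //; lra.
- by rewrite max_l ?ler_norml; [lra | apply/andP; split; lra].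
- by rewrite max_l ?ler_norml; [lra | apply/andP; split; lra].
Qed.

Lemma loop_level_lower t s : s <= 1/2 -> loop_level (t, s) = ray_level (t, s).
Proof.
move=> s_le; rewrite /loop_level /ray_level /= (@ger0_norm _ (1 - 2 * s)); last lra.
by rewrite max_l // le_max; apply/orP; right; lra.
Qed.

Lemma loop_level_upper t s : 0 <= t <= 1 -> 1/2 < s -> 0 < stretch (t, s) < 1 ->
  loop_level (t, s) = 0.
Proof.
move=> t01 s_gt; rewrite /stretch /= min_r; last exact: ltW.
move=> /andP[z0 z1]; rewrite /loop_level /=.
have [_ _ _ [->|->]] := edge_distP s t01;
  by rewrite max_r // ge_max; apply/andP; split; lra.
Qed.

Section NullHomotopy.
Variable g : R -> R * R.
Hypotheses (g_cont : {within unit_I R, continuous g}) (g_loop : g 0 = g 1).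
Hypothesis g_in : forall t, unit_I R t -> S (g t).

(* For s <= 1/2 the loop g is dilated by 1 - 2s on the middle of [0, 1] and
   joined to g 0 along the dilation curve of g 0 near the ends; for s >= 1/2
   only this ray remains and is retracted to g 0.  Wherever loop_level differs
   from ray_level the second summand vanishes, so the value is always a dilate
   of a point of g and stays in S. *)
Definition contraction (p : R * R) : R * R :=
  dil (ray_level p) (g 0) + dil (loop_level p) (g (clamp01 (stretch p)) - g 0).

Lemma contraction_continuous : continuous contraction.
Proof.
move=> p; rewrite /contraction /ray_level /loop_level /edge_dist.
apply: cvgD; apply: cvg_wdilate; cvg_expr.
have stretch_cvg : stretch @ p --> stretch p by rewrite /stretch; cvg_expr.
have gc := @continuous_comp_clamp01 R _ g g_cont (stretch p).
exact: continuous_cvg _ gc stretch_cvg.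
Qed.

Lemma contraction_idle p : g (clamp01 (stretch p)) = g 0 ->
  contraction p = dil (ray_level p) (g 0).
Proof. by rewrite /contraction => ->; rewrite subrr /wdilate /= !mulr0 addr0. Qed.

Lemma stretch_outside p : stretch p <= 0 \/ 1 <= stretch p ->
  g (clamp01 (stretch p)) = g 0.
Proof. by case=> [/clamp01_le0|/clamp01_ge1] ->. Qed.

Lemma contraction_in t s : unit_I R t -> unit_I R s -> S (contraction (t, s)).
Proof.
move=> /unit_IP t01 /unit_IP s01.
have S_ray : S (dil (ray_level (t, s)) (g 0)).
  by apply: S_wdilate (ray_level_unit t01 s01) (g_in _); apply/unit_IP; rewrite lexx ler01.
have [z0|z0] := leP (stretch (t, s)) 0.
  by rewrite contraction_idle // stretch_outside //; left.
have [z1|z1] := leP 1 (stretch (t, s)).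
  by rewrite contraction_idle // stretch_outside //; right.
have [s_le|s_gt] := leP s (1/2).
  rewrite /contraction loop_level_lower // -wdilateD addrC subrK.
  exact: S_wdilate (ray_level_unit t01 s01) (g_in (clamp01_in _)).
by rewrite /contraction (loop_level_upper t01 s_gt) ?z0 // wdilate0 addr0.
Qed.

Lemma contraction_bottom t : unit_I R t -> contraction (t, 0) = g t.
Proof.
move=> tI; have /unit_IP t01 := tI; have s01 : 0 <= (0 : R) <= 1 by rewrite lexx ler01.
have z : stretch (t, 0) = t by rewrite /stretch /= min_l; [lra | lra].
rewrite /contraction loop_level_lower; last lra.
rewrite ray_level_boundary ?z ?clamp01_id //; last by apply: Or41.
by rewrite wdilate1 wdilate1 addrC subrK.
Qed.

Lemma contraction_top t : unit_I R t -> contraction (t, 1) = g 0.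
Proof.
move=> /unit_IP t01; have s01 : 0 <= (1 : R) <= 1 by rewrite ler01 lexx.
have ray1 : ray_level (t, 1) = 1 by apply: ray_level_boundary => //; apply: Or42.
have [z0|z0] := leP (stretch (t, 1)) 0.
  by rewrite contraction_idle ?ray1 ?wdilate1 // stretch_outside //; left.
have [z1|z1] := leP 1 (stretch (t, 1)).
  by rewrite contraction_idle ?ray1 ?wdilate1 // stretch_outside //; right.
rewrite /contraction (loop_level_upper t01) ?z0 //; last lra.
by rewrite wdilate0 addr0 ray1 wdilate1.
Qed.

Lemma contraction_sides s : unit_I R s ->
  contraction (0, s) = g 0 /\ contraction (1, s) = g 0.
Proof.
move=> /unit_IP s01; have [s0 s1] := andP s01.
have m0 : 0 <= Num.min s (1/2) by rewrite le_min s0; lra.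
split; rewrite contraction_idle ?ray_level_boundary ?wdilate1 //.
- by rewrite lexx ler01.
- by apply: Or43.
- by rewrite stretch_outside //; left; rewrite /stretch /=; nra.
- by rewrite ler01 lexx.
- by apply: Or44.
- by rewrite stretch_outside //; right; rewrite /stretch /=; nra.
Qed.

End NullHomotopy.

Lemma weighted_star_simply_connected : simply_connected S.
Proof.
split; first by exists 0.
  move=> x y Sx Sy; exists (star_path x y); split; [split|exact: star_path0|exact: star_path1].
    exact/continuous_subspaceT/star_path_continuous.
  by move=> t; exact: star_path_in.
move=> g [gc gS] g01; exists (contraction g); split.
- exact/continuous_subspaceT/contraction_continuous.
- by case=> t s [/= tI sI]; exact: contraction_in.
- exact: contraction_bottom.
- exact: contraction_top.
- exact: contraction_sides.
Qed.

End WeightedStarShaped.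

Definition sinkless (k : nat) (H : rel 'I_k) : Prop := forall i, exists j, H i j.

Lemma C3_sinkless : sinkless C3.
Proof.
by case=> -[|[|[|//]]] ?;
  [exists (inord 1) | exists (inord 2) | exists (inord 0)]; rewrite /C3 inordK.
Qed.

Lemma C4_sinkless : sinkless C4.
Proof.
by case=> -[|[|[|[|//]]]] ?;
  [exists (inord 1) | exists (inord 2) | exists (inord 3) | exists (inord 0)]; rewrite /C4 inordK.
Qed.

Definition copies (k n : nat) (H : rel 'I_k) (T : rel 'I_n) : {set {set 'I_n}} :=
  [set A : {set 'I_n} | (#|A| == k) && `[< spans_copy H T A >]]%SET.

Lemma card_copies_le (k n : nat) (H : rel 'I_k) (T : rel 'I_n) :
  (#|copies H T| <= 'C(n, k))%N.
Proof.
rewrite -[n in 'C(n, k)]card_ord -card_draws; apply: subset_leq_card.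
by apply/fintype.subsetP => A; rewrite !inE => /andP[].
Qed.

Section TransitiveExtension.
Variables (N L : nat) (T : rel 'I_N).

Definition extend_transitive : rel 'I_(N + L) := fun x y =>
  match fintype.split x, fintype.split y with
  | inl a, inl b => T a b
  | _, _ => (x < y)%N
  end.

Lemma extend_transitive_lshift a b :
  extend_transitive (lshift L a) (lshift L b) = T a b.
Proof.
by rewrite /extend_transitive -[lshift L a]/(unsplit (inl a))
  -[lshift L b]/(unsplit (inl b)) !unsplitK.
Qed.

Lemma extend_transitive_new_out (z y : 'I_(N + L)) :
  (N <= z)%N -> (y <= z)%N -> extend_transitive z y = false.
Proof.
rewrite leqNgt /extend_transitive => + yz; case: (split_ordP z) => c _ // _.
by case: (fintype.split y); rewrite ltnNge yz.
Qed.

Lemma is_tournament_extend_transitive :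
  is_tournament T -> is_tournament extend_transitive.
Proof.
case=> Tirr Ttot; split=> [x|x y xy]; rewrite /extend_transitive.
  by case: (fintype.split x) => a; [exact: Tirr | rewrite ltnn].
case ex: (fintype.split x) => [a|a]; case ey: (fintype.split y) => [b|b].
- apply: Ttot; apply: contra xy => /eqP ab.
  by rewrite -(splitK x) -(splitK y) ex ey ab.
all: by case: ltngtP => // e; move: xy; rewrite -val_eqE /= e eqxx.
Qed.

Variables (k : nat) (H : rel 'I_k).

Lemma spans_copy_lshift (A : {set 'I_N}) :
  spans_copy H extend_transitive (lshift L @: A) <-> spans_copy H T A.
Proof.
split=> [[f [finj fim fH]]|[f [finj fim fH]]]; last first.
  exists (lshift L \o f); split=> [i j /lshift_inj /finj //||i j].
    by rewrite -fim -imset_comp.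
  by rewrite extend_transitive_lshift.
have fN i : (f i < N)%N.
  have : f i \in lshift L @: A by rewrite -fim imset_f ?inE.
  by case/imsetP => a _ ->; exact: ltn_ord a.
pose f' i := Ordinal (fN i).
have ef i : lshift L (f' i) = f i by apply: val_inj.
exists f'; split=> [i j /(congr1 (lshift L)) /[!ef] /finj //||i j].
  by apply: (imset_inj (@lshift_inj N L)); rewrite -fim -imset_comp; apply: eq_imset.
by rewrite fH -!ef extend_transitive_lshift.
Qed.

Hypothesis H_sinkless : sinkless H.

Lemma spans_copy_extend_transitive_old (B : {set 'I_(N + L)}) :
  spans_copy H extend_transitive B -> B = lshift L @: (lshift L @^-1: B).
Proof.
move=> [f [finj fim fH]].
suff BN x : x \in B -> (x < N)%N.
  apply/setP => x; apply/idP/imsetP => [xB|[a + ->]]; last by rewrite inE.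
  have ex : lshift L (Ordinal (BN x xB)) = x by apply: val_inj.
  by exists (Ordinal (BN x xB)); rewrite ?inE ex.
move=> xB; rewrite ltnNge; apply/negP => Nx.
have [z zB zmax] := @arg_maxnP _ x (mem B) val xB.
have : z \in f @: setT by rewrite fim.
case/imsetP => i _ zi; have [j Hij] := H_sinkless i.
have fjB : f j \in B by rewrite -fim imset_f ?inE.
move: Hij; rewrite fH -zi extend_transitive_new_out //; last exact: zmax.
exact: leq_trans Nx (zmax _ xB).
Qed.

Lemma copies_extend_transitive :
  copies H extend_transitive = (fun A : {set 'I_N} => lshift L @: A) @: copies H T.
Proof.
apply/setP => B; rewrite inE; apply/idP/imsetP => [/andP[cB /asboolP sB]|].
  have eB := spans_copy_extend_transitive_old sB.
  exists (lshift L @^-1: B); last exact: eB.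
  rewrite inE -(card_imset _ (@lshift_inj N L)) -eB cB /=.
  by apply/asboolP; apply/spans_copy_lshift; rewrite -eB.
case=> A; rewrite inE => /andP[cA /asboolP sA] ->.
rewrite card_imset ?cA /=; last exact: lshift_inj.
by apply/asboolP; apply/spans_copy_lshift.
Qed.

Lemma pr_extend_transitive (R : realType) :
  pr R H extend_transitive = pr R H T * ('C(N, k)%:R / 'C(N + L, k)%:R).
Proof.
rewrite /pr -/(copies _ _) -/(copies _ _) copies_extend_transitive.
rewrite card_imset; last exact/imset_inj/lshift_inj.
have [C0|C0] := eqVneq 'C(N, k) 0%N.
  by move: (card_copies_le H T); rewrite C0 leqn0 => /eqP ->; rewrite !mul0r.
by rewrite mulrA divfK // pnatr_eq0.
Qed.

End TransitiveExtension.
Arguments extend_transitive {N} L T.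

Section BinomialRatio.
Variable R : realType.
Implicit Types (u v : nat -> nat) (a : R).

Lemma natr_inv_cvg0 u : u @ \oo --> \oo -> ((u m)%:R^-1 : R) @[m --> \oo] --> 0.
Proof.
move=> uy; apply/cvgrVy.
  by apply: filterS ((cvgnyPge u).1 uy 1%N) => m; rewrite invr_gt0 ltr0n.
apply: cvg_trans ((cvgrnyP _).2 uy); apply: near_eq_cvg.
by apply: nearW => m /=; rewrite invrK.
Qed.

Lemma ratio_pred_cvg u v a : u @ \oo --> \oo -> (forall m, u m <= v m)%N ->
  ((u m)%:R / (v m)%:R : R) @[m --> \oo] --> a ->
  (((u m).-1)%:R / ((v m).-1)%:R : R) @[m --> \oo] --> a.
Proof.
move=> uy uv uva.
have vy : v @ \oo --> \oo.
  apply/cvgnyPge => A; apply: filterS ((cvgnyPge u).1 uy A) => m uA.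
  exact: leq_trans uA (uv m).
have lim : ((u m)%:R / (v m)%:R - (v m)%:R^-1) / (1 - (v m)%:R^-1) @[m --> \oo]
    --> (a - 0) / (1 - 0).
  apply: cvgM; first exact: cvgB uva (natr_inv_cvg0 vy).
  by apply: cvgV; [rewrite subr0 oner_neq0 | exact: cvgB (cvg_cst _) (natr_inv_cvg0 vy)].
rewrite !subr0 divr1 in lim; apply: cvg_trans lim; apply: near_eq_cvg; near=> m.
have v2 : (2 <= v m)%N by near: m; exact: (cvgnyPge v).1 vy 2%N.
have u1 : (1 <= u m)%N by near: m; exact: (cvgnyPge u).1 uy 1%N.
have v0 : (v m)%:R != 0 :> R by rewrite pnatr_eq0 -lt0n (leq_trans _ v2).
have v10 : (v m)%:R - 1 != 0 :> R by rewrite subr_eq0 pnatr_eq1 gtn_eqF.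
rewrite -!subn1 !natrB //; last exact: leq_trans v2.
by field; rewrite v0 v10.
Unshelve. all: by end_near.
Qed.

Lemma binomial_ratio_cvg k u v a : u @ \oo --> \oo -> (forall m, u m <= v m)%N ->
  ((u m)%:R / (v m)%:R : R) @[m --> \oo] --> a ->
  ('C(u m, k)%:R / 'C(v m, k)%:R : R) @[m --> \oo] --> a ^+ k.
Proof.
elim: k u v => [|k IHk] u v uy uv uva.
  by rewrite expr0; under eq_fun do rewrite !bin0 divr1; exact: cvg_cst.
have uy' : (fun m => (u m).-1) @ \oo --> \oo.
  by apply/cvgnyPge => A; apply: filterS ((cvgnyPge u).1 uy A.+1) => m; case: (u m).
have uv' m : ((u m).-1 <= (v m).-1)%N by rewrite -!subn1 leq_sub2r.
have binS_ratio n p : 'C(n, k.+1)%:R / 'C(p, k.+1)%:R =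
    n%:R / p%:R * ('C(n.-1, k)%:R / 'C(p.-1, k)%:R) :> R.
  rewrite mulf_div -!natrM !mul_bin_diag !natrM -mulf_div.
  by rewrite divff ?mul1r // pnatr_eq0.
under eq_fun do rewrite binS_ratio.
by rewrite exprS; apply: cvgM uva (IHk _ _ uy' uv' (ratio_pred_cvg uy uv uva)).
Qed.

Lemma floor_ratio_cvg (N : nat -> nat) (b : R) : N @ \oo --> \oo -> 0 <= b ->
  ((N m)%:R / (N m + Num.truncn ((N m)%:R * b))%:R : R) @[m --> \oo] --> (1 + b)^-1.
Proof.
move=> Ny b0; set L := fun m => Num.truncn ((N m)%:R * b).
have N0 : \forall m \near \oo, (N m)%:R != 0 :> R.
  by apply: filterS ((cvgnyPge N).1 Ny 1%N) => m; rewrite pnatr_eq0 -lt0n.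
have Lb : (L m)%:R / (N m)%:R @[m --> \oo] --> b.
  apply: (@squeeze_cvgr _ _ _ _ (fun m => b - (N m)%:R^-1) (fun=> b)); last exact: cvg_cst.
    apply: filterS N0 => m Nm0.
    move: (truncn_itv (mulr_ge0 (ler0n R (N m)) b0)) => /andP[Ll Lu].
    rewrite ler_pdivrMr ?ler_pdivlMr ?lt_def ?Nm0 //=.
    by rewrite /L mulrBl mulVf // [b * _]mulrC Ll andbT lerBlDr natr1 ltW.
  by rewrite -[X in _ --> X]subr0; exact: cvgB (cvg_cst _) (natr_inv_cvg0 Ny).
have lim : ((1 + (L m)%:R / (N m)%:R)^-1 : R) @[m --> \oo] --> (1 + b)^-1.
  by apply: cvgV; [rewrite gt_eqF ?ltr_wpDr | apply: cvgD; [exact: cvg_cst | exact: Lb]].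
apply: cvg_trans lim; apply: near_eq_cvg; apply: filterS N0 => m Nm0.
by rewrite -[RHS]invf_div natrD mulrDl divff.
Qed.

End BinomialRatio.

Section LimitSet.
Variable R : realType.

Lemma divergesP (N : nat -> nat) :
  (forall B : nat, exists M : nat, forall m, (M <= m)%N -> (B <= N m)%N) <->
  N @ \oo --> \oo.
Proof.
by rewrite cvgnyPge; split=> NB B; have := NB B; [case=> M NM | case=> M _ NM]; exists M.
Qed.

Let empty_tournament : rel 'I_0 := fun _ _ => false.

Lemma limit_set0 : limit_set R 0.
Proof.
have pr0 k (H : rel 'I_k.+1) m :
    sinkless H -> pr R H (extend_transitive m empty_tournament) = 0.
  by move=> Hs; rewrite pr_extend_transitive // /pr bin0n invr0 !mulr0 !mul0r.
exists (fun m => 0 + m)%N, (fun m => extend_transitive m empty_tournament); split=> [m||/=|/=].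
- by apply: is_tournament_extend_transitive; split=> -[].
- by move=> B; exists B.
- by under eq_fun do rewrite (pr0 _ _ _ C3_sinkless); exact: cvg_cst.
- by under eq_fun do rewrite (pr0 _ _ _ C4_sinkless); exact: cvg_cst.
Qed.

Lemma limit_set_wdilate a p : 0 <= a <= 1 -> limit_set R p ->
  limit_set R (wdilate 3 4 a p).
Proof.
move=> /andP[a0 a1] [N [T [Ttour Ny c3 c4]]]; move/divergesP: Ny => Ny.
case: (eqVneq a 0) => [->|an0]; first by rewrite /wdilate !expr0n !mul0r; exact: limit_set0.
set b := (1 - a) / a.
have b0 : 0 <= b by rewrite divr_ge0 // subr_ge0.
have ab : (1 + b)^-1 = a by rewrite /b -{1}(divff an0) -mulrDl addrC subrK div1r invrK.
have NLa := floor_ratio_cvg Ny b0; rewrite ab in NLa.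
pose L m := Num.truncn ((N m)%:R * b).
have NN m : (N m <= N m + L m)%N := leq_addr _ _.
exists (fun m => N m + L m)%N, (fun m => extend_transitive (L m) (T m)); split.
- by move=> m; apply: is_tournament_extend_transitive.
- apply/divergesP/cvgnyPge => B; apply: filterS ((cvgnyPge N).1 Ny B) => m.
  by move/leq_trans; apply.
- under eq_fun do rewrite (pr_extend_transitive _ _ C3_sinkless).
  by rewrite /= mulrC; apply: cvgM c3 (binomial_ratio_cvg Ny NN NLa).
- under eq_fun do rewrite (pr_extend_transitive _ _ C4_sinkless).
  by rewrite /= mulrC; apply: cvgM c4 (binomial_ratio_cvg Ny NN NLa).
Qed.

End LimitSet.

Theorem lemma1p3 (R : realType) : simply_connected (limit_set R).
Proof.
apply: (@weighted_star_simply_connected R 3 4) => //.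
  exact: limit_set0.
by move=> a p; exact: limit_set_wdilate.
Qed.
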